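(* Fix a state $(\mathbf x(n),\mathbf g(n))$ of the model in the context and two feasible withdrawal vectors $\mathbf y(n)$ and $\mathbf y'(n)$. Then $\mathbf y'(n)$ can be obtained from $\mathbf y(n)$ by performing a sequence of feasible single-server reallocations.
   Context: Model: real queues $1,\dots,L$, dummy queue $0$, $K$ identical servers. State: queue lengths $x_i(n)\in\mathbb Z_+$ ($x_0=0$), connectivities $g_{i,j}(n)\in\{0,1\}$ ($g_{0,j}=1$). A scheduling control $\mathbf q\in\{0,\dots,L\}^K$ (server $j$ serves $q_j$, $0$ = idle) is feasible if $g_{q_j,j}=1$ for all $j$ and each real queue $i$ gets at most $x_i$ servers; its withdrawal vector is $y_i=\#\{j:q_j=i\}$; a withdrawal vector is feasible if it arises from a feasible control (an implementation of it). Given a feasible withdrawal vector with implementation $\mathbf q$, a feasible single-server reallocation from queue $t$ to queue $f$ changes $q_k$ from $t$ to $f$ for a single server $k$ with $q_k=t$, such that the new control is again feasible; the new withdrawal vector is the old one plus $\mathbf I(f,t)$, where $\mathbf I(f,t)$ has $+1$ at $f$, $-1$ at $t$ and $0$ elsewhere ($\mathbf I(f,f)=0$). *)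

From mathcomp Require Import all_boot.
From Stdlib Require Import Relation_Operators.
Set Implicit Arguments. Unset Strict Implicit. Unset Printing Implicit Defensive.

(* Queues are indexed by 'I_L.+1: index 0 (ord0) is the dummy queue, indices
   1..L are the real queues.
   A state consists of queue lengths x : {ffun 'I_L.+1 -> nat} (with x ord0 = 0)
   and connectivities g : 'I_L.+1 -> 'I_K -> bool (with g ord0 j = true). *)

(* A scheduling control: server j serves queue q j (ord0 = idle). *)
Definition control (L K : nat) := {ffun 'I_K -> 'I_L.+1}.

Definition withdrawal (L K : nat) (q : control L K) : {ffun 'I_L.+1 -> nat} :=
  [ffun i => #|[set j | q j == i]|].

Definition feasible_control (L K : nat) (x : {ffun 'I_L.+1 -> nat})
    (g : 'I_L.+1 -> 'I_K -> bool) (q : control L K) : Prop :=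
  (forall j : 'I_K, g (q j) j) /\
  (forall i : 'I_L.+1, i != ord0 -> withdrawal q i <= x i).

Definition implements (L K : nat) (x : {ffun 'I_L.+1 -> nat})
    (g : 'I_L.+1 -> 'I_K -> bool) (q : control L K) (y : {ffun 'I_L.+1 -> nat}) : Prop :=
  feasible_control x g q /\ withdrawal q = y.

Definition feasible_withdrawal (L K : nat) (x : {ffun 'I_L.+1 -> nat})
    (g : 'I_L.+1 -> 'I_K -> bool) (y : {ffun 'I_L.+1 -> nat}) : Prop :=
  exists q : control L K, implements x g q y.

(* the vector I(f,t): +1 at f, -1 at t, 0 elsewhere (I(f,f) = 0); on
   withdrawal vectors we use the nat-valued update y + I(f,t). *)
Definition reallocate_vec (L : nat) (y : {ffun 'I_L.+1 -> nat}) (f t : 'I_L.+1)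
  : {ffun 'I_L.+1 -> nat} :=
  [ffun i => if f == t then y i
             else if i == f then (y i).+1
             else if i == t then (y i).-1 else y i].

Definition reassign (L K : nat) (q : control L K) (k : 'I_K) (f : 'I_L.+1) : control L K :=
  [ffun j => if j == k then f else q j].

Definition single_realloc (L K : nat) (x : {ffun 'I_L.+1 -> nat})
    (g : 'I_L.+1 -> 'I_K -> bool) (y y' : {ffun 'I_L.+1 -> nat}) : Prop :=
  exists (q : control L K) (k : 'I_K) (f t : 'I_L.+1),
    [/\ implements x g q y, q k = t,
        feasible_control x g (reassign q k f) &
        y' = reallocate_vec y f t].

Definition realloc_reachable (L K : nat) (x : {ffun 'I_L.+1 -> nat})
    (g : 'I_L.+1 -> 'I_K -> bool) : {ffun 'I_L.+1 -> nat} -> {ffun 'I_L.+1 -> nat} -> Prop :=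
  clos_refl_trans _ (@single_realloc L K x g).

From mathcomp Require Import all_boot.
From Stdlib Require Import Relation_Operators.
Set Implicit Arguments. Unset Strict Implicit. Unset Printing Implicit Defensive.

(* Any feasible control can be dismantled one server at a time into the
   all-idle control: sending a server to the dummy queue keeps the control
   feasible, since g ord0 j holds and no real queue gains a server.  Two
   controls differing on a single server are related by one reallocation in
   either direction, so y reaches the all-idle withdrawal vector, and that
   vector reaches y' by rebuilding an implementation of y' server by server. *)

Section Reallocation.

Variables (L K : nat) (x : {ffun 'I_L.+1 -> nat}) (g : 'I_L.+1 -> 'I_K -> bool).

Lemma withdrawal_reassign (q : control L K) k f :
  withdrawal (reassign q k f) = reallocate_vec (withdrawal q) f (q k).
Proof.
apply/ffunP=> i; rewrite !ffunE.
have [fq|nfq] := eqVneq f (q k).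
  by apply: eq_card => j; rewrite !inE ffunE; case: (j =P k) => [->|]; rewrite ?fq.
rewrite (cardsD1 k [set j | reassign q k f j == i]) (cardsD1 k [set j | q j == i]).
have -> : [set j | reassign q k f j == i] :\ k = [set j | q j == i] :\ k.
  by apply/setP=> j; rewrite !inE ffunE; case: eqP.
rewrite !inE ffunE eqxx [f == i]eq_sym [q k == i]eq_sym.
have [->|] := eqVneq i f; first by rewrite (negbTE nfq).
by case: (i =P q k).
Qed.

Lemma single_realloc_one_server (q q' : control L K) (k : 'I_K) :
  feasible_control x g q -> feasible_control x g q' ->
  (forall j, j != k -> q j = q' j) ->
  single_realloc x g (withdrawal q) (withdrawal q').
Proof.
move=> Fq Fq' eq_qq'.
have def_q' : q' = reassign q k (q' k).
  by apply/ffunP=> j; rewrite ffunE; case: eqVneq => [->|/eq_qq'].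
exists q, k, (q' k), (q k); split; rewrite -?def_q' //.
by rewrite {1}def_q' withdrawal_reassign.
Qed.

Definition idle_control : control L K := [ffun=> ord0].

Definition idle_from (p : control L K) (n : nat) : control L K :=
  [ffun j : 'I_K => if j < n then p j else ord0].

Hypothesis g_idle : forall j : 'I_K, g ord0 j.

Lemma feasible_idle_from p n :
  feasible_control x g p -> feasible_control x g (idle_from p n).
Proof.
move=> [Gp Wp]; split=> [j|i ni0]; first by rewrite ffunE; case: ifP.
apply: leq_trans (Wp i ni0); rewrite !ffunE.
apply/subset_leq_card/subsetP=> j; rewrite !inE ffunE.
by case: ifP => // _ /eqP i0; rewrite -i0 eqxx in ni0.
Qed.

Lemma idle_from0 p : idle_from p 0 = idle_control.
Proof. by apply/ffunP=> j; rewrite !ffunE. Qed.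

Lemma idle_from_full p : idle_from p K = p.
Proof. by apply/ffunP=> j; rewrite ffunE ltn_ord. Qed.

Lemma realloc_reachable_idle p n :
  feasible_control x g p ->
  realloc_reachable x g (withdrawal (idle_from p n)) (withdrawal idle_control) /\
  realloc_reachable x g (withdrawal idle_control) (withdrawal (idle_from p n)).
Proof.
move=> Fp; elim: n => [|n [IHto IHfrom]].
  by rewrite idle_from0; split; apply: rt_refl.
have [ltnK | leKn] := ltnP n K; last first.
  suff -> : idle_from p n.+1 = idle_from p n by [].
  apply/ffunP=> j; have ltjn : j < n := leq_trans (ltn_ord j) leKn.
  by rewrite !ffunE ltnS ltjn ltnW.
have eq_off_n j : j != Ordinal ltnK -> idle_from p n.+1 j = idle_from p n j.
  by rewrite -val_eqE => njn; rewrite !ffunE ltnS leq_eqVlt (negbTE njn).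
have F'n := feasible_idle_from n Fp; have F'Sn := feasible_idle_from n.+1 Fp.
split.
- apply: rt_trans IHto; apply: rt_step.
  exact: single_realloc_one_server eq_off_n.
- apply: rt_trans IHfrom _; apply: rt_step.
  by apply: single_realloc_one_server (Ordinal ltnK) _ _ _ => // j /eq_off_n.
Qed.

End Reallocation.

Theorem mainTheorem12 (L K : nat) (x : {ffun 'I_L.+1 -> nat})
    (g : 'I_L.+1 -> 'I_K -> bool)
    (hx0 : x ord0 = 0) (hg0 : forall j : 'I_K, g ord0 j = true)
    (y y' : {ffun 'I_L.+1 -> nat}) :
  feasible_withdrawal (K := K) x g y ->
  feasible_withdrawal (K := K) x g y' ->
  realloc_reachable (K := K) x g y y'.
Proof.
move=> [q [Fq <-]] [q' [Fq' <-]].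
have [to_idle _] := realloc_reachable_idle hg0 K Fq.
have [_ from_idle] := realloc_reachable_idle hg0 K Fq'.
rewrite idle_from_full in to_idle; rewrite idle_from_full in from_idle.
exact: rt_trans to_idle from_idle.
Qed.
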